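(* For every abstract transducer $T_\epsilon=(Q,D_I,D_O,\iota_0,F,\delta)$ (possibly having $\epsilon$-moves) there exists an input-$\epsilon$-free abstract transducer $T$ with the same abstract input domain and abstract output domain such that $T_\epsilon\equiv T$, i.e. $\mathrm{Tr}(T_\epsilon)=\mathrm{Tr}(T)$ and $\mathrm{Tr}_{acc}(T_\epsilon)=\mathrm{Tr}_{acc}(T)$.
   Context: Abstract word domain over an alphabet $A$: a set $W$ of abstract words forming a complete lattice $(W,\sqsubseteq,\sqcap,\sqcup,\top,\bot)$, a denotation $[\![\cdot]\!]:W\to 2^{A^\infty}$ with $A^\infty=A^*\cup A^\omega$, and an abstraction $\alpha:2^{A^\infty}\to W$ with $[\![\alpha(S)]\!]=S$. It contains an abstract epsilon word $w_\epsilon$ with $[\![w_\epsilon]\!]=\{\epsilon\}$, and $[\![\bot]\!]=\emptyset$. Operations: concatenation $[\![u\cdot v]\!]=\{x\cdot y\mid x\in[\![u]\!],y\in[\![v]\!]\}$ (an infinite word $x$ concatenated with anything is $x$); left quotient $u^{v}=\alpha(\{s\mid p\cdot s\in[\![u]\!],\,p\in[\![v]\!]\})$; $\mathrm{head}(u)=\alpha(\{h\mid |h|=1,\ h\cdot x\in[\![u]\!]\})$; $\mathrm{tail}(u)=\alpha(\{x\mid h\cdot x\in[\![u]\!],\ |h|=1\})$. An abstract transducer is $T=(Q,D_I,D_O,\iota_0,F,\delta)$ where: $Q$ is a finite set of control states, implicitly containing a trap state $q_{trap}$ with transition $(q_{trap},\top,q_{trap},w_\epsilon)$ and a bottom state $q_\bot\notin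 F$ with no leaving transitions; $D_I$ is an abstract word domain (abstract words $W_I$) over a concrete input alphabet $\Sigma$ with denotations in $2^{\Sigma^*}$ and whose lattice is distributive and complemented; $D_O$ is an abstract word domain (abstract words $W_O$) over an output alphabet $\Theta$; $\iota_0$ is a non-empty finite partial map $Q\to W_O$ (the initial transducer state); $F\subseteq Q$ are accepting states; $\delta\subseteq Q\times W_I\times Q\times W_O$ is the transition relation, where no transition has input word $\bot$. A transducer state is a finite partial map $Q\to W_O$ (a set of pairs with distinct first components). For a set $M\subseteq Q\times W_O$ its image join is $\bigsqcup_\to M=\{(q,\bigsqcup\{\theta\mid(q,\theta)\in M\})\mid (q,\cdot)\in M\}$. An $\epsilon$-move is a transition whose input word $w$ has $[\![w]\!]=\{\epsilon\}$; $T$ is input-$\epsilon$-free if it has no $\epsilon$-move. The $\epsilon$-closure $E(q)$ is the set of states reachable from $q$ (including $q$) using only $\epsilon$-moves, plus $q_\bot$ if $E(q)$ contains an $\epsilon$-loop from which no state without leaving $\epsilon$-moves is reachable. Closure termination states: $CT(q)=\{q'\in E(q)\mid$ no $\epsilon$-move leaves $q'\}\cup(E(q)\cap F)$. Concrete language on termination $\Lambda(q,q_t)$: for $q_t\neq q_\bot$ the union, over all finite paths of $\epsilon$-moves from $q$ to $q_t$, of the concatenation of the denotations of the output words along the path ($\{\epsilon\}$ for the empty path); for $q_t=q_\bot$ the union over all infinite $\epsilon$-move paths from $q$ of the concatenations of their output denotations. Output closure (lossless): $\mathrm{Cl}(q,\theta_0)=\{(q_t,\alpha([\![\theta_0]\!]\cdot\Lambda(q,q_t)))\mid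 q_t\in CT(q)\}$. Run: $\mathrm{run}(q,\theta,w,w_\ell)=\{(q,\theta)\}$ if $w=w_\epsilon$, and otherwise $\bigsqcup_\to\bigcup\{\mathrm{run}(q'',\theta\cdot\theta'',\mathrm{tail}(w),w_\ell)\mid (q,w_\tau,q',\theta')\in\delta,\ (q'',\theta'')\in\mathrm{Cl}(q',\theta'),\ (w\cdot w_\ell)^{w_\tau}\neq\bot,\ \mathrm{head}(w)^{\mathrm{head}(w_\tau)}\neq\bot\}$. For a transducer state $\iota$, $\widehat{\mathrm{run}}(\iota,w,w_\ell)=\bigsqcup_\to\bigcup_{(q,\theta)\in\iota}\mathrm{run}(q,\theta,w,w_\ell)$, and for $\bar\sigma\in\Sigma^*$, $\hat\sigma\subseteq\Sigma^*$: $\widehat{\mathrm{run}}_T(\bar\sigma,\hat\sigma)=\widehat{\mathrm{run}}(\iota_0,\alpha_I(\{\bar\sigma\}),\alpha_I(\hat\sigma))$. Intermediate input language $L_{in}(T)$: pairs $(\bar\sigma,\hat\sigma)$ such that $\widehat{\mathrm{run}}_T(\bar\sigma,\hat\sigma)$ contains a pair $(q,\theta)$ with $[\![\theta]\!]\neq\emptyset$. Transductions $\mathrm{Tr}(T)=\{(\bar\sigma,\hat\sigma,[\![\theta]\!])\mid(\bar\sigma,\hat\sigma)\in L_{in}(T),\ (q,\theta)\in\widehat{\mathrm{run}}_T(\bar\sigma,\hat\sigma)\}$; accepting transductions $\mathrm{Tr}_{acc}(T)$: same with additionally $q\in F$. Two transducers are equivalent ($T_1\equiv T_2$) iff $\mathrm{Tr}(T_1)=\mathrm{Tr}(T_2)$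 and $\mathrm{Tr}_{acc}(T_1)=\mathrm{Tr}_{acc}(T_2)$. *)

From Stdlib Require Import List.
Import ListNotations.
Set Implicit Arguments.

Inductive iword (A : Type) : Type :=
| Fin : list A -> iword A
| Inf : (nat -> A) -> iword A.
Arguments Fin {A} _.
Arguments Inf {A} _.

Definition icat {A : Type} (x y : iword A) : iword A :=
  match x, y with
  | Fin l, Fin m => Fin (l ++ m)
  | Fin l, Inf f =>
      Inf (fun n => if Nat.ltb n (length l) then nth n l (f 0) else f (n - length l))
  | Inf f, _ => Inf f
  end.

Definition ising {A : Type} (a : A) : iword A := Fin [a].

Fixpoint icatn {A : Type} (xs : nat -> iword A) (n : nat) : iword A :=
  match n with
  | 0 => Fin []
  | S k => icat (icatn xs k) (xs k)
  end.

Definition shorter {A : Type} (w : iword A) (k : nat) : Prop :=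
  exists l, w = Fin l /\ length l < k.

(* z is the (infinite) concatenation x_0 x_1 x_2 ... :
   every finite partial concatenation is a prefix of z, and z is either
   equal to some partial concatenation or the partial concatenations are
   unboundedly long (so z is the infinite limit). *)
Definition iconcat_inf {A : Type} (xs : nat -> iword A) (z : iword A) : Prop :=
  (forall n, exists r, z = icat (icatn xs n) r) /\
  ((exists n, z = icatn xs n) \/ (forall k, exists n, ~ shorter (icatn xs n) k)).

(* X = type of concrete words, xeps = the empty word.
   The lattice is complete: sup gives the join of an arbitrary set. *)
Record AWD (X : Type) (xeps : X) := {
  W : Type;
  le : W -> W -> Prop;
  sup : (W -> Prop) -> W;
  le_refl : forall u, le u u;
  le_trans : forall u v w, le u v -> le v w -> le u w;
  le_antisym : forall u v, le u v -> le v u -> u = v;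
  sup_ub : forall (S : W -> Prop) u, S u -> le u (sup S);
  sup_least : forall (S : W -> Prop) v, (forall u, S u -> le u v) -> le (sup S) v;
  den : W -> X -> Prop;
  alpha : (X -> Prop) -> W;
  den_alpha : forall (S : X -> Prop) x, den (alpha S) x <-> S x;
  weps : W;
  den_weps : forall x, den weps x <-> x = xeps;
  den_bot : forall x, ~ den (sup (fun _ => False)) x
}.
Arguments AWD : clear implicits.
Arguments W {X xeps} _.
Arguments le {X xeps} _ _ _.
Arguments sup {X xeps} _ _.
Arguments den {X xeps} _ _ _.
Arguments alpha {X xeps} _ _.
Arguments weps {X xeps} _.

Section LatticeOps.
Context {X : Type} {xeps : X} (D : AWD X xeps).
Definition wtop : W D := sup D (fun _ => True).
Definition wbot : W D := sup D (fun _ => False).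
Definition wjoin (u v : W D) : W D := sup D (fun x => x = u \/ x = v).
Definition wmeet (u v : W D) : W D := sup D (fun x => le D x u /\ le D x v).
End LatticeOps.

Section WordOps.
Context {A X : Type} {xeps : X} (cat : X -> X -> X) (sing : A -> X)
        (D : AWD X xeps).
Definition wconcat (u v : W D) : W D :=
  alpha D (fun z => exists x y, den D u x /\ den D v y /\ z = cat x y).
Definition wlquot (u v : W D) : W D :=
  alpha D (fun s => exists p, den D v p /\ den D u (cat p s)).
Definition whead (u : W D) : W D :=
  alpha D (fun h => exists a x, h = sing a /\ den D u (cat h x)).
Definition wtail (u : W D) : W D :=
  alpha D (fun x => exists a, den D u (cat (sing a) x)).
End WordOps.

Record InDomain (Sig : Type) := {
  aw : AWD (list Sig) [];
  in_distr : forall u v w : W aw,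
      wmeet aw u (wjoin aw v w) = wjoin aw (wmeet aw u v) (wmeet aw u w);
  in_compl : forall u : W aw, exists v,
      wmeet aw u v = wbot aw /\ wjoin aw u v = wtop aw
}.
Arguments InDomain : clear implicits.
Arguments aw {Sig} _.

Definition OutDomain (The : Type) := AWD (iword The) (Fin []).

Section Transducers.
Context {Sig The : Type} (DI : InDomain Sig) (DO : OutDomain The).

Notation IW := (W (aw DI)).
Notation OW := (W DO).

(* Q is finite and implicitly contains q_trap and q_bot.  The trap
   transition (q_trap, top, q_trap, w_eps) is implicit (see [trans]);
   delta lists the explicit transitions. *)
Record transducer := {
  Q : Type;
  Q_fin : exists l : list Q, forall q, In q l;
  qtrap : Q;
  qbot : Q;
  qtrap_qbot : qtrap <> qbot;
  iota0 : Q -> OW -> Prop;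
  iota0_fun : forall q t1 t2, iota0 q t1 -> iota0 q t2 -> t1 = t2;
  iota0_ne : exists q t, iota0 q t;
  Facc : Q -> Prop;
  qbot_notF : ~ Facc qbot;
  delta : Q -> IW -> Q -> OW -> Prop;
  delta_notbot : forall q w q' t, delta q w q' t -> w <> wbot (aw DI);
  delta_qbot : forall w q' t, ~ delta qbot w q' t;
  delta_qtrap : forall w q' t, ~ delta qtrap w q' t
}.
Arguments Q : clear implicits.

Definition trans (T : transducer) (q : Q T) (w : IW) (q' : Q T) (t : OW) : Prop :=
  delta T q w q' t \/
  (q = qtrap T /\ w = wtop (aw DI) /\ q' = qtrap T /\ t = weps DO).

Definition eps_word (w : IW) : Prop := forall s, den (aw DI) w s <-> s = [].

Definition eps_move (T : transducer) q w q' t : Prop :=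
  trans T q w q' t /\ eps_word w.

Definition eps_free (T : transducer) : Prop :=
  forall q w q' t, delta T q w q' t -> ~ eps_word w.

Definition eps_step (T : transducer) (q q' : Q T) : Prop :=
  exists w t, eps_move T q w q' t.

Inductive ereach (T : transducer) (q : Q T) : Q T -> Prop :=
| er_refl : ereach T q q
| er_step : forall q1 q2, ereach T q q1 -> eps_step T q1 q2 -> ereach T q q2.

Definition has_eps_out (T : transducer) (q : Q T) : Prop :=
  exists q', eps_step T q q'.

Definition in_E (T : transducer) (q q' : Q T) : Prop :=
  ereach T q q' \/
  (q' = qbot T /\
   exists q1, ereach T q q1 /\
     (exists q2, eps_step T q1 q2 /\ ereach T q2 q1) /\
     (forall q3, ereach T q1 q3 -> has_eps_out T q3)).

Definition CT (T : transducer) (q q' : Q T) : Prop :=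
  in_E T q q' /\ (~ has_eps_out T q' \/ Facc T q').

Inductive epath (T : transducer) : Q T -> Q T -> iword The -> Prop :=
| ep_nil : forall q, epath T q q (Fin [])
| ep_cons : forall q w q1 t q2 x y,
    eps_move T q w q1 t -> den DO t x -> epath T q1 q2 y ->
    epath T q q2 (icat x y).

Definition inf_epath (T : transducer) (q : Q T) (z : iword The) : Prop :=
  exists (qs : nat -> Q T) (ws : nat -> IW) (ts : nat -> OW) (xs : nat -> iword The),
    qs 0 = q /\
    (forall i, eps_move T (qs i) (ws i) (qs (S i)) (ts i) /\ den DO (ts i) (xs i)) /\
    iconcat_inf xs z.

Definition Lambda (T : transducer) (q qt : Q T) (z : iword The) : Prop :=
  (qt <> qbot T /\ epath T q qt z) \/ (qt = qbot T /\ inf_epath T q z).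

Definition Cl (T : transducer) (q : Q T) (t0 : OW) : Q T -> OW -> Prop :=
  fun qt t => CT T q qt /\
    t = alpha DO (fun z => exists x y, den DO t0 x /\ Lambda T q qt y /\ z = icat x y).

Definition ijoin {Qt : Type} (M : Qt -> OW -> Prop) : Qt -> OW -> Prop :=
  fun q t => (exists t', M q t') /\ t = sup DO (M q).

Definition iconc (u v : IW) : IW := wconcat (@app Sig) (aw DI) u v.
Definition iquot (u v : IW) : IW := wlquot (@app Sig) (aw DI) u v.
Definition ihead (u : IW) : IW := whead (@app Sig) (fun a : Sig => [a]) (aw DI) u.
Definition itail (u : IW) : IW := wtail (@app Sig) (fun a : Sig => [a]) (aw DI) u.
Definition oconc (u v : OW) : OW := wconcat (@icat The) DO u v.

Definition adm (T : transducer) (q : Q T) (w wl wt : IW) (q' : Q T) (t' : OW)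
    (q'' : Q T) (t'' : OW) : Prop :=
  trans T q wt q' t' /\ Cl T q' t' q'' t'' /\
  iquot (iconc w wl) wt <> wbot (aw DI) /\
  iquot (ihead w) (ihead wt) <> wbot (aw DI).

(* RunR T q t w wl M  <->  run(q, t, w, wl) = M  (least solution of the
   recursive definition) *)
Inductive RunR (T : transducer) : Q T -> OW -> IW -> IW -> (Q T -> OW -> Prop) -> Prop :=
| run_base : forall q t w wl, w = weps (aw DI) ->
    RunR T q t w wl (fun q' t' => q' = q /\ t' = t)
| run_step : forall q t w wl
    (f : IW -> Q T -> OW -> Q T -> OW -> (Q T -> OW -> Prop)),
    w <> weps (aw DI) ->
    (forall wt q' t' q'' t'', adm T q w wl wt q' t' q'' t'' ->
        RunR T q'' (oconc t t'') (itail w) wl (f wt q' t' q'' t'')) ->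
    RunR T q t w wl
      (ijoin (fun q0 t0 => exists wt q' t' q'' t'',
                 adm T q w wl wt q' t' q'' t'' /\ f wt q' t' q'' t'' q0 t0)).

Definition RunHat (T : transducer) (iota : Q T -> OW -> Prop) (w wl : IW)
    (M : Q T -> OW -> Prop) : Prop :=
  exists g : Q T -> OW -> (Q T -> OW -> Prop),
    (forall q t, iota q t -> RunR T q t w wl (g q t)) /\
    M = ijoin (fun q0 t0 => exists q t, iota q t /\ g q t q0 t0).

Definition runT (T : transducer) (sb : list Sig) (sh : list Sig -> Prop)
    (M : Q T -> OW -> Prop) : Prop :=
  RunHat T (iota0 T) (alpha (aw DI) (fun s => s = sb)) (alpha (aw DI) sh) M.

Definition Lin (T : transducer) (sb : list Sig) (sh : list Sig -> Prop) : Prop :=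
  exists M, runT T sb sh M /\ exists q t, M q t /\ exists x, den DO t x.

Definition Tr (T : transducer) (sb : list Sig) (sh : list Sig -> Prop)
    (L : iword The -> Prop) : Prop :=
  Lin T sb sh /\
  exists M q t, runT T sb sh M /\ M q t /\ (forall x, L x <-> den DO t x).

Definition Tr_acc (T : transducer) (sb : list Sig) (sh : list Sig -> Prop)
    (L : iword The -> Prop) : Prop :=
  Lin T sb sh /\
  exists M q t, runT T sb sh M /\ M q t /\ Facc T q /\ (forall x, L x <-> den DO t x).

Definition tequiv (T1 T2 : transducer) : Prop :=
  (forall sb sh L, Tr T1 sb sh L <-> Tr T2 sb sh L) /\
  (forall sb sh L, Tr_acc T1 sb sh L <-> Tr_acc T2 sb sh L).

End Transducers.

From Stdlib Require Import List Classical FunctionalExtensionality PropExtensionality.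
Import ListNotations.
Set Implicit Arguments.

(* A run treats every transition (q, w, q', t') of the original transducer
   as a step consuming one input letter, followed by the output closure
   Cl(q', t') of its target; epsilon-moves enter a run only through these
   closures.  The epsilon-free transducer composes each transition with that
   closure: reading w, it jumps from q straight to every q'' in CT(q') with
   the closure's output.  Its own closures are trivial, so its runs from q are
   the runs of the original transducer from q, transported along the
   embedding of states.  Only the labels must change, see [relabel]. *)

Lemma rel_ext (A B : Type) (P R : A -> B -> Prop) :
  (forall a b, P a b <-> R a b) -> P = R.
Proof.
  intros H. apply functional_extensionality; intro a.
  apply functional_extensionality; intro b. apply propositional_extensionality, H.
Qed.

Lemma icat_nil_r (A : Type) (x : iword A) : icat x (Fin []) = x.
Proof. destruct x as [l | f]; simpl; [now rewrite app_nil_r | reflexivity]. Qed.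

Definition image_rel (A B C : Type) (e : A -> B) (M : A -> C -> Prop) : B -> C -> Prop :=
  fun b c => exists a, b = e a /\ M a c.

Lemma image_rel_at (A B C : Type) (e : A -> B) (M : A -> C -> Prop) a :
  (forall a1 a2, e a1 = e a2 -> a1 = a2) -> image_rel e M (e a) = M a.
Proof.
  intros e_inj. apply functional_extensionality; intro c.
  apply propositional_extensionality. split.
  - intros (a' & E & H). now rewrite (e_inj _ _ E).
  - intros H. now exists a.
Qed.

Section AlphaFacts.
Context {X : Type} {xeps : X} (D : AWD X xeps).

Lemma alpha_ext (S S' : X -> Prop) : (forall x, S x <-> S' x) -> alpha D S = alpha D S'.
Proof.
  intros H. f_equal. apply functional_extensionality; intro x.
  apply propositional_extensionality, H.
Qed.

Lemma alpha_den_alpha (S : X -> Prop) : alpha D (den D (alpha D S)) = alpha D S.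
Proof. apply alpha_ext, den_alpha. Qed.

Definition empty_bot : Prop := alpha D (fun _ => False) = wbot D.

Lemma alpha_eq_bot (S : X -> Prop) : alpha D S = wbot D -> empty_bot /\ forall x, ~ S x.
Proof.
  intros E.
  assert (HS : forall x, ~ S x).
  { intros x Hx. apply (den_bot D x). change (den D (wbot D) x). rewrite <- E. now apply den_alpha. }
  split; [|exact HS]. unfold empty_bot. rewrite <- E. apply alpha_ext. firstorder.
Qed.

Lemma alpha_empty_eq_bot (S : X -> Prop) : empty_bot -> (forall x, ~ S x) -> alpha D S = wbot D.
Proof. intros He HS. unfold empty_bot in He. rewrite <- He. apply alpha_ext. firstorder. Qed.

End AlphaFacts.

Section InputTests.
Context {Sig : Type} (DI : InDomain Sig).
Notation D := (aw DI).

Lemma iquot_neq_bot (u v : W D) : ~ empty_bot D -> iquot DI u v <> wbot D.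
Proof. intros Hne E. apply alpha_eq_bot in E. tauto. Qed.

Lemma iquot_bot (u : W D) : empty_bot D -> iquot DI u (wbot D) = wbot D.
Proof.
  intros He. apply alpha_empty_eq_bot; [exact He|].
  intros s (p & Hp & _). exact (den_bot _ _ Hp).
Qed.

Lemma iquot_ihead_eps (u wt : W D) :
  empty_bot D -> eps_word DI wt -> iquot DI (ihead DI u) (ihead DI wt) = wbot D.
Proof.
  intros He Heps. apply alpha_empty_eq_bot; [exact He|].
  intros s (p & Hp & _). apply den_alpha in Hp as (a & x & -> & Hx).
  apply Heps in Hx. discriminate.
Qed.

Lemma alpha_empty_not_eps : ~ eps_word DI (alpha D (fun _ => False)).
Proof. intros Heps. apply (proj1 (den_alpha D (fun _ => False) [])), Heps. reflexivity. Qed.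

Definition adm_tests (w wl wt : W D) : Prop :=
  iquot DI (iconc DI w wl) wt <> wbot D /\ iquot DI (ihead DI w) (ihead DI wt) <> wbot D.

(* If alpha(empty) is bottom, the head test rejects every epsilon-label, so
   epsilon-labelled transitions can be dropped.  Otherwise no quotient is ever
   bottom, the tests pass for any label, and every label may be replaced by
   alpha(empty), which is neither bottom nor epsilon. *)
Definition relabel (wt wt' : W D) : Prop :=
  (empty_bot D /\ wt' = wt /\ ~ eps_word DI wt /\ wt <> wbot D) \/
  (~ empty_bot D /\ wt' = alpha D (fun _ => False)).

Lemma relabel_not_eps (wt wt' : W D) : relabel wt wt' -> ~ eps_word DI wt'.
Proof. intros [(_ & -> & Heps & _) | (_ & ->)]; [exact Heps | apply alpha_empty_not_eps]. Qed.

Lemma relabel_not_bot (wt wt' : W D) : relabel wt wt' -> wt' <> wbot D.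
Proof. intros [(_ & -> & _ & Hbot) | (Hne & ->)]; [exact Hbot | exact Hne]. Qed.

Lemma relabel_adm_tests (w wl wt wt' : W D) :
  relabel wt wt' -> (adm_tests w wl wt' <-> adm_tests w wl wt).
Proof.
  intros [(_ & -> & _) | (Hne & _)]; [reflexivity|].
  split; intros _; split; apply iquot_neq_bot; exact Hne.
Qed.

Lemma relabel_of_adm_tests (w wl wt : W D) : adm_tests w wl wt -> exists wt', relabel wt wt'.
Proof.
  intros [Hcat Hhead]. destruct (classic (empty_bot D)) as [He | Hne].
  - exists wt. left. repeat split; auto.
    + intros Heps. exact (Hhead (iquot_ihead_eps _ He Heps)).
    + intros ->. exact (Hcat (iquot_bot _ He)).
  - exists (alpha D (fun _ => False)). now right.
Qed.

End InputTests.

Section TransducerFacts.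
Context {Sig The : Type} {DI : InDomain Sig} {DO : OutDomain The}.
Notation OW := (W DO).

Lemma image_rel_ijoin (A B : Type) (e : A -> B) (M : A -> OW -> Prop) :
  (forall a1 a2, e a1 = e a2 -> a1 = a2) ->
  image_rel e (ijoin DO M) = ijoin DO (image_rel e M).
Proof.
  intros e_inj. apply rel_ext; intros b t. unfold ijoin. split.
  - intros (a & -> & HM). now rewrite !image_rel_at by exact e_inj.
  - intros [[t' (a & -> & Ha)] Ht]. rewrite !image_rel_at in Ht by exact e_inj.
    exists a. split; [reflexivity|]. split; [now exists t' | exact Ht].
Qed.

Lemma eps_step_eps_free (T : transducer DI DO) q q' :
  eps_free T -> eps_step T q q' -> q = qtrap T.
Proof.
  intros Hfree (w & t & [Hd | (-> & _)] & Heps); [|reflexivity].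
  contradiction (Hfree _ _ _ _ Hd Heps).
Qed.

Lemma alpha_den_Cl (T : transducer DI DO) q t q' t' :
  Cl T q t q' t' -> alpha DO (den DO t') = t'.
Proof. intros [_ ->]. apply alpha_den_alpha. Qed.

Section NoEpsilonStep.
Variables (T : transducer DI DO) (q : Q T).
Hypothesis q_stuck : forall q', ~ eps_step T q q'.
Hypothesis q_not_bot : q <> qbot T.

Lemma ereach_stuck x : ereach T q x -> x = q.
Proof.
  induction 1 as [|q1 q2 _ IH Hs]; [reflexivity|].
  subst q1. contradiction (q_stuck Hs).
Qed.

Lemma CT_stuck q' : CT T q q' <-> q' = q.
Proof.
  split.
  - intros [[Hr | (_ & q1 & Hr & (q2 & Hs & _) & _)] _]; [exact (ereach_stuck Hr)|].
    rewrite (ereach_stuck Hr) in Hs. contradiction (q_stuck Hs).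
  - intros ->. split; [left; constructor | left; intros [q' Hs]; exact (q_stuck Hs)].
Qed.

Lemma Lambda_stuck y : Lambda T q q y <-> y = Fin [].
Proof.
  split.
  - intros [[_ Hp] | [Hbot _]]; [|contradiction (q_not_bot Hbot)].
    inversion Hp as [| ? w q1 t ? ? ? Hm]; [reflexivity|].
    contradiction (q_stuck (q' := q1)). now exists w, t.
  - intros ->. left. split; [exact q_not_bot | constructor].
Qed.

Lemma Cl_stuck t q'' t'' : Cl T q t q'' t'' <-> q'' = q /\ t'' = alpha DO (den DO t).
Proof.
  assert (Hz : forall z, (exists x y, den DO t x /\ Lambda T q q y /\ z = icat x y) <-> den DO t z).
  { intro z. split.
    - intros (x & y & Hx & Hy & ->). apply Lambda_stuck in Hy as ->. now rewrite icat_nil_r.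
    - intros Hz. exists z, (Fin []). now rewrite Lambda_stuck, icat_nil_r. }
  unfold Cl. rewrite CT_stuck. split; intros [-> ->]; split; try reflexivity;
    apply alpha_ext; intro z; [|symmetry]; apply Hz.
Qed.

End NoEpsilonStep.

Section Runs.
Variable T : transducer DI DO.

Lemma run_functional q t w wl M1 M2 :
  RunR T q t w wl M1 -> RunR T q t w wl M2 -> M1 = M2.
Proof.
  intros H1. revert M2.
  induction H1 as [q t w wl Hw | q t w wl f Hw Hrun IH]; intros M2 H2;
    inversion H2 as [? ? ? ? Hw2 | ? ? ? ? f2 Hw2 Hrun2]; subst; try congruence.
  f_equal. apply rel_ext; intros q0 t0.
  split; intros (wt & q' & t' & q'' & t'' & Ha & Hf); exists wt, q', t', q'', t'';
    (split; [exact Ha|]); pose proof (IH _ _ _ _ _ Ha _ (Hrun2 _ _ _ _ _ Ha)) as E;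
    [rewrite <- E | rewrite E]; exact Hf.
Qed.

Definition run_rel q t w wl : Q T -> OW -> Prop :=
  fun q0 t0 => exists M, RunR T q t w wl M /\ M q0 t0.

Lemma run_rel_eq q t w wl M : RunR T q t w wl M -> run_rel q t w wl = M.
Proof.
  intros HM. apply rel_ext; intros q0 t0. split.
  - intros (M' & HM' & H0). now rewrite (run_functional HM HM').
  - intros H0. now exists M.
Qed.

Definition branch_union q t w wl : Q T -> OW -> Prop :=
  fun q0 t0 => exists wt q' t' q'' t'', adm T q w wl wt q' t' q'' t'' /\
    run_rel q'' (oconc DO t t'') (itail DI w) wl q0 t0.

Lemma run_step_rel q t w wl :
  w <> weps (aw DI) ->
  (forall wt q' t' q'' t'', adm T q w wl wt q' t' q'' t'' ->
     exists M, RunR T q'' (oconc DO t t'') (itail DI w) wl M) ->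
  RunR T q t w wl (ijoin DO (branch_union q t w wl)).
Proof.
  intros Hw Hex. apply run_step; [exact Hw|].
  intros wt q' t' q'' t'' Ha. destruct (Hex _ _ _ _ _ Ha) as [M HM].
  now rewrite (run_rel_eq HM).
Qed.

Lemma run_step_union q t w wl f :
  (forall wt q' t' q'' t'', adm T q w wl wt q' t' q'' t'' ->
     RunR T q'' (oconc DO t t'') (itail DI w) wl (f wt q' t' q'' t'')) ->
  (fun q0 t0 => exists wt q' t' q'' t'',
     adm T q w wl wt q' t' q'' t'' /\ f wt q' t' q'' t'' q0 t0) = branch_union q t w wl.
Proof.
  intros Hrun. apply rel_ext; intros q0 t0.
  split; intros (wt & q' & t' & q'' & t'' & Ha & Hf); exists wt, q', t', q'', t'';
    (split; [exact Ha|]); pose proof (run_rel_eq (Hrun _ _ _ _ _ Ha)) as E;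
    [rewrite E | rewrite <- E]; exact Hf.
Qed.

Lemma RunHat_iff (iota : Q T -> OW -> Prop) w wl M :
  RunHat T iota w wl M <->
  (forall q t, iota q t -> exists M, RunR T q t w wl M) /\
  M = ijoin DO (fun q0 t0 => exists q t, iota q t /\ run_rel q t w wl q0 t0).
Proof.
  split.
  - intros (g & Hg & ->). split; [intros q t Hi; eauto|].
    f_equal. apply rel_ext; intros q0 t0.
    split; intros (q & t & Hi & H0); exists q, t; split; try exact Hi;
      [rewrite (run_rel_eq (Hg _ _ Hi)) | rewrite <- (run_rel_eq (Hg _ _ Hi))]; exact H0.
  - intros [Hex ->]. exists (fun q t => run_rel q t w wl). split; [|reflexivity].
    intros q t Hi. destruct (Hex _ _ Hi) as [M HM]. now rewrite (run_rel_eq HM).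
Qed.

End Runs.

Section RunEmbedding.
Variables (T1 T2 : transducer DI DO) (e : Q T1 -> Q T2).
Hypothesis e_inj : forall q1 q2, e q1 = e q2 -> q1 = q2.
Hypothesis runT_embed :
  forall sb sh M', runT T2 sb sh M' <-> exists M, runT T1 sb sh M /\ M' = image_rel e M.
Hypothesis Facc_embed : forall q, Facc T2 (e q) <-> Facc T1 q.

Lemma run_witness_embed sb sh (P1 : Q T1 -> OW -> Prop) (P2 : Q T2 -> OW -> Prop) :
  (forall q t, P2 (e q) t <-> P1 q t) ->
  (exists M q t, runT T1 sb sh M /\ M q t /\ P1 q t) <->
  (exists M q t, runT T2 sb sh M /\ M q t /\ P2 q t).
Proof.
  intros HP. split.
  - intros (M & q & t & HM & Hq & H1). exists (image_rel e M), (e q), t.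
    rewrite image_rel_at by exact e_inj. split; [apply runT_embed; eauto|].
    split; [exact Hq | now apply HP].
  - intros (M' & p & t & HM & Hp & H2). apply runT_embed in HM as (M & HM & ->).
    destruct Hp as (q & -> & Hq). exists M, q, t. split; [exact HM|].
    split; [exact Hq | now apply HP].
Qed.

Lemma tequiv_of_run_embedding : tequiv T1 T2.
Proof.
  assert (Hlin : forall sb sh, Lin T1 sb sh <-> Lin T2 sb sh).
  { intros sb sh. unfold Lin.
    destruct (run_witness_embed sb sh (fun _ t => exists x, den DO t x)
      (fun _ t => exists x, den DO t x) (fun _ _ => iff_refl _)) as [H12 H21].
    split.
    - intros (M & HM & q & t & Hq & Hx).
      destruct H12 as (M' & q' & t' & HM' & Hq' & Hx'); eauto 7.
    - intros (M & HM & q & t & Hq & Hx).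
      destruct H21 as (M' & q' & t' & HM' & Hq' & Hx'); eauto 7. }
  split; intros sb sh L; unfold Tr, Tr_acc; rewrite Hlin;
    apply and_iff_compat_l, run_witness_embed; intros q t.
  - reflexivity.
  - now rewrite Facc_embed.
Qed.

End RunEmbedding.

End TransducerFacts.

Section EpsilonRemoval.
Variables (Sig The : Type) (DI : InDomain Sig) (DO : OutDomain The) (Te : transducer DI DO).
Notation IW := (W (aw DI)).
Notation OW := (W DO).

(* [None] is the trap state and [Some None] the bottom state; both are unreachable. *)
Definition ef_state : Type := option (option (Q Te)).
Definition emb (q : Q Te) : ef_state := Some (Some q).

Lemma emb_inj q1 q2 : emb q1 = emb q2 -> q1 = q2.
Proof. intros E. now injection E. Qed.

Definition ef_delta (p : ef_state) (wt' : IW) (p'' : ef_state) (t'' : OW) : Prop :=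
  exists q wt q' t' q'', p = emb q /\ p'' = emb q'' /\
    trans Te q wt q' t' /\ Cl Te q' t' q'' t'' /\ relabel DI wt wt'.

Definition ef_Facc (p : ef_state) : Prop := exists q, p = emb q /\ Facc Te q.

Lemma ef_state_finite : exists l : list ef_state, forall p, In p l.
Proof.
  destruct (Q_fin Te) as [l Hl]. exists (None :: Some None :: map emb l).
  intros [[q|]|]; simpl; auto. right; right. apply (in_map emb), Hl.
Qed.

Lemma ef_iota0_functional p t1 t2 :
  image_rel emb (iota0 Te) p t1 -> image_rel emb (iota0 Te) p t2 -> t1 = t2.
Proof.
  intros (q1 & -> & H1) (q2 & E & H2). apply emb_inj in E as <-.
  exact (iota0_fun Te _ _ _ H1 H2).
Qed.

Lemma ef_iota0_nonempty : exists p t, image_rel emb (iota0 Te) p t.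
Proof. destruct (iota0_ne Te) as (q & t & H). now exists (emb q), t, q. Qed.

Lemma ef_Facc_bot : ~ ef_Facc (Some None).
Proof. intros (q & E & _). discriminate. Qed.

Lemma ef_delta_not_bot p w p' t : ef_delta p w p' t -> w <> wbot (aw DI).
Proof. intros (_ & wt & _ & _ & _ & _ & _ & _ & _ & Hrel). exact (relabel_not_bot Hrel). Qed.

Lemma ef_delta_from_bot w p' t : ~ ef_delta (Some None) w p' t.
Proof. intros (q & _ & _ & _ & _ & E & _). discriminate. Qed.

Lemma ef_delta_from_trap w p' t : ~ ef_delta None w p' t.
Proof. intros (q & _ & _ & _ & _ & E & _). discriminate. Qed.

Definition Tef : transducer DI DO := {|
  Q := ef_state; Q_fin := ef_state_finite;
  qtrap := None; qbot := Some None; qtrap_qbot := ltac:(discriminate);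
  iota0 := image_rel emb (iota0 Te);
  iota0_fun := ef_iota0_functional; iota0_ne := ef_iota0_nonempty;
  Facc := ef_Facc; qbot_notF := ef_Facc_bot;
  delta := ef_delta; delta_notbot := ef_delta_not_bot;
  delta_qbot := ef_delta_from_bot; delta_qtrap := ef_delta_from_trap |}.

Lemma Tef_eps_free : eps_free Tef.
Proof.
  intros p w p' t (_ & wt & _ & _ & _ & _ & _ & _ & _ & Hrel).
  exact (relabel_not_eps Hrel).
Qed.

Lemma Facc_Tef q : Facc Tef (emb q) <-> Facc Te q.
Proof.
  split; [intros (q' & E & H); now apply emb_inj in E as -> | intros H; now exists q].
Qed.

Lemma Cl_Tef q t p t'' : Cl Tef (emb q) t p t'' <-> p = emb q /\ t'' = alpha DO (den DO t).
Proof.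
  apply Cl_stuck; [|discriminate].
  intros p' Hs. apply eps_step_eps_free in Hs; [discriminate | exact Tef_eps_free].
Qed.

Lemma adm_lift q w wl wt q' t' q'' t'' :
  adm Te q w wl wt q' t' q'' t'' ->
  exists wt', adm Tef (emb q) w wl wt' (emb q'') t'' (emb q'') t''.
Proof.
  intros (Htr & HCl & Htests).
  destruct (relabel_of_adm_tests Htests) as [wt' Hrel].
  exists wt'. split; [|split].
  - left. exists q, wt, q', t', q''. auto.
  - apply Cl_Tef. split; [reflexivity|]. symmetry. exact (alpha_den_Cl HCl).
  - apply (relabel_adm_tests _ _ Hrel). exact Htests.
Qed.

Lemma adm_unlift q w wl wt' p' s' p'' s'' :
  adm Tef (emb q) w wl wt' p' s' p'' s'' ->
  exists wt q' t' q'', p'' = emb q'' /\ adm Te q w wl wt q' t' q'' s''.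
Proof.
  intros ([Hd | (Htrap & _)] & HCl & Htests); [|discriminate].
  destruct Hd as (q0 & wt & q' & t' & q'' & E & -> & Htr & HCl' & Hrel).
  apply emb_inj in E as <-. apply Cl_Tef in HCl as [-> ->].
  exists wt, q', t', q''. split; [reflexivity|].
  rewrite (alpha_den_Cl HCl'). split; [exact Htr | split; [exact HCl'|]].
  apply (relabel_adm_tests _ _ Hrel). exact Htests.
Qed.

Notation lift := (image_rel emb).

Lemma branch_union_lift q t w wl :
  (forall wt q' t' q'' t'', adm Te q w wl wt q' t' q'' t'' ->
     run_rel Tef (emb q'') (oconc DO t t'') (itail DI w) wl =
     lift (run_rel Te q'' (oconc DO t t'') (itail DI w) wl)) ->
  branch_union Tef (emb q) t w wl = lift (branch_union Te q t w wl).
Proof.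
  intros Hrel. apply rel_ext; intros p0 t0. split.
  - intros (wt' & p' & s' & p'' & t'' & Ha & Hr).
    destruct (adm_unlift Ha) as (wt & q' & t' & q'' & -> & Ha').
    rewrite (Hrel _ _ _ _ _ Ha') in Hr. destruct Hr as (q0 & -> & Hr).
    exists q0. split; [reflexivity|]. now exists wt, q', t', q'', t''.
  - intros (q0 & -> & wt & q' & t' & q'' & t'' & Ha & Hr).
    destruct (adm_lift Ha) as [wt' Ha'].
    exists wt', (emb q''), t'', (emb q''), t''. split; [exact Ha'|].
    rewrite (Hrel _ _ _ _ _ Ha). now exists q0.
Qed.

Lemma run_lift q t w wl M : RunR Te q t w wl M -> RunR Tef (emb q) t w wl (lift M).
Proof.
  induction 1 as [q t w wl Hw | q t w wl f Hw Hrun IH].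
  - replace (lift _) with (fun p t' => p = emb q /\ t' = t); [now apply run_base|].
    apply rel_ext; intros p t'. split.
    + intros [-> ->]. now exists q.
    + intros (q0 & -> & -> & ->). now split.
  - rewrite (run_step_union _ _ Hrun), image_rel_ijoin by exact emb_inj.
    rewrite <- branch_union_lift.
    + apply run_step_rel; [exact Hw|]. intros wt' p' s' p'' s'' Ha.
      destruct (adm_unlift Ha) as (wt & q' & t' & q'' & -> & Ha').
      eexists. exact (IH _ _ _ _ _ Ha').
    + intros wt q' t' q'' t'' Ha.
      now rewrite (run_rel_eq (IH _ _ _ _ _ Ha)), (run_rel_eq (Hrun _ _ _ _ _ Ha)).
Qed.

Lemma run_unlift p t w wl M' :
  RunR Tef p t w wl M' -> forall q, p = emb q -> exists M, RunR Te q t w wl M.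
Proof.
  induction 1 as [p t w wl Hw | p t w wl f Hw Hrun IH]; intros q ->.
  - eexists. now apply run_base.
  - eexists. apply run_step_rel; [exact Hw|]. intros wt q' t' q'' t'' Ha.
    destruct (adm_lift Ha) as [wt' Ha']. exact (IH _ _ _ _ _ Ha' q'' eq_refl).
Qed.

Lemma run_Tef_iff q t w wl M' :
  RunR Tef (emb q) t w wl M' <-> exists M, RunR Te q t w wl M /\ M' = lift M.
Proof.
  split.
  - intros H. destruct (run_unlift H eq_refl) as [M HM].
    exists M. split; [exact HM | exact (run_functional H (run_lift HM))].
  - intros (M & HM & ->). exact (run_lift HM).
Qed.

Lemma run_rel_Tef q t w wl : run_rel Tef (emb q) t w wl = lift (run_rel Te q t w wl).
Proof.
  apply rel_ext; intros p0 t0. split.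
  - intros (M' & HM' & Hp). apply run_Tef_iff in HM' as (M & HM & ->).
    destruct Hp as (q0 & -> & H0). exists q0. split; [reflexivity|]. now exists M.
  - intros (q0 & -> & M & HM & H0). exists (lift M). split; [exact (run_lift HM)|].
    now exists q0.
Qed.

Lemma runT_Tef_iff sb sh M' :
  runT Tef sb sh M' <-> exists M, runT Te sb sh M /\ M' = lift M.
Proof.
  unfold runT. set (w := alpha (aw DI) (fun s => s = sb)). set (wl := alpha (aw DI) sh).
  assert (Hex : (forall p t, lift (iota0 Te) p t -> exists M, RunR Tef p t w wl M) <->
                (forall q t, iota0 Te q t -> exists M, RunR Te q t w wl M)).
  { split.
    - intros H q t Hi. destruct (H (emb q) t) as [N HN]; [now exists q|].
      apply run_Tef_iff in HN as (M & HM & _). now exists M.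
    - intros H p t (q & -> & Hi). destruct (H q t Hi) as [M HM].
      exists (lift M). now apply run_Tef_iff; exists M. }
  assert (Hset : ijoin DO (fun p0 t0 => exists p t, lift (iota0 Te) p t /\
                             run_rel Tef p t w wl p0 t0) =
                 lift (ijoin DO (fun q0 t0 => exists q t, iota0 Te q t /\
                             run_rel Te q t w wl q0 t0))).
  { rewrite image_rel_ijoin by exact emb_inj. f_equal.
    apply rel_ext; intros p0 t0. split.
    - intros (p & t & (q & -> & Hi) & H0). rewrite run_rel_Tef in H0.
      destruct H0 as (q0 & -> & H0). exists q0. split; [reflexivity|]. now exists q, t.
    - intros (q0 & -> & q & t & Hi & H0). exists (emb q), t.
      split; [now exists q|]. rewrite run_rel_Tef. now exists q0. }
  split.
  - intros [Hr ->]%RunHat_iff. eexists. split; [|exact Hset].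
    apply RunHat_iff. split; [now apply Hex | reflexivity].
  - intros (M & [Hr ->]%RunHat_iff & ->). apply RunHat_iff.
    split; [now apply Hex | symmetry; exact Hset].
Qed.

End EpsilonRemoval.

Theorem mainTheorem1 :
  forall (Sig The : Type) (DI : InDomain Sig) (DO : OutDomain The)
         (Te : transducer DI DO),
  exists T : transducer DI DO, eps_free T /\ tequiv Te T.
Proof.
  intros Sig The DI DO Te. exists (Tef Te). split.
  - apply Tef_eps_free.
  - apply (@tequiv_of_run_embedding _ _ _ _ Te (Tef Te) (emb Te)).
    + apply emb_inj.
    + apply runT_Tef_iff.
    + apply Facc_Tef.
Qed.
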